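(* Let $p\ge1$ and let $T_\alpha{}_i^{k_1\cdots k_p}=T_\alpha{}_i^{(k_1\cdots k_p)}$ be constants (indices $i,k_r\in\{0,1,2,3\}$, $\alpha$ ranging over a finite index set) such that \[T_\alpha{}_i^{k_1\cdots k_p}\,a^\alpha_{k_1\cdots k_p}{}_j{}^j=T_\alpha{}_j^{k_1\cdots k_p}\,a^\alpha_{k_1\cdots k_p}{}_i{}^j\] holds identically in the variables $a^\alpha_{i_1\cdots i_{p+2}}$, which are arbitrary and totally symmetric in their lower indices. Then there are constants $S_\alpha^{k_1\cdots k_{p-1}}=S_\alpha^{(k_1\cdots k_{p-1})}$ such that $T_\alpha{}_i^{k_1\cdots k_p}=\delta_i^{(k_1}S_\alpha^{k_2\cdots k_p)}$.
   Context: Indices are raised and lowered with the Minkowski metric $\eta=\mathrm{diag}(-1,1,1,1)$, round brackets denote symmetrization, repeated indices are summed. *)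

From HB Require Import structures.
From mathcomp Require Import all_boot all_order all_algebra all_fingroup.
From mathcomp Require Import reals.
Set Implicit Arguments. Unset Strict Implicit. Unset Printing Implicit Defensive.
Import Order.TTheory GRing.Theory Num.Theory.
Local Open Scope ring_scope.

Notation midx n := {ffun 'I_n -> 'I_4}.

(* Minkowski metric eta = diag(-1,1,1,1); its inverse eta^{jl} has the
   same components, and is the one used to raise indices. *)
Definition eta_inv {R : ringType} (j l : 'I_4) : R :=
  if j == l then (if (j : nat) == 0%N then -1 else 1) else 0.

Definition kdelta {R : ringType} (i k : 'I_4) : R := (i == k)%:R.

Definition totally_symmetric {R : Type} {n : nat} (f : midx n -> R) : Prop :=
  forall (s : {perm 'I_n}) (k : midx n), f [ffun x => k (s x)] = f k.

Definition ext2 {p : nat} (k : midx p) (j l : 'I_4) : midx (p + 2) :=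
  [ffun m : 'I_(p + 2) =>
     match split m with
     | inl x => k x
     | inr y => if (y : nat) == 0%N then j else l
     end].

Definition sym_delta_S {R : realType} {q : nat} (i : 'I_4)
  (S : midx q -> R) (k : midx q.+1) : R :=
  ((q.+1)`!%:R)^-1 *
  \sum_(s : {perm 'I_q.+1})
     kdelta i (k (s ord0)) * S [ffun x => k (s (lift ord0 x))].

From HB Require Import structures.
From mathcomp Require Import all_boot all_order all_algebra all_fingroup.
From mathcomp Require Import reals mpoly.
Set Implicit Arguments. Unset Strict Implicit. Unset Printing Implicit Defensive.
Import Order.TTheory GRing.Theory Num.Theory.
Local Open Scope ring_scope.

(* A totally symmetric F with n slots is encoded by its generating polynomial
   t = sum_k F_k x_{k_1} ... x_{k_n} in four variables; this encoding is
   injective on symmetric tensors, sends delta_i^(k_1 S^k_2...k_p) to x_i S(x),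
   and turns contraction with eta into multiplication by the quadratic form
   Q = eta^{jl} x_j x_l.  Testing the hypothesis on the indicator of a monomial
   gives t_i Q = x_i U for a polynomial U, hence x_j t_i = x_i t_j because
   polynomials form a domain.  Applying sum_j d/dx_j and Euler's identity
   yields (p + 3) t_i = x_i sum_j d t_j / dx_j, and the divergence on the right
   is p times the polynomial of the trace T_j^{j k_2 ... k_p}. *)

Definition midx_mnm n (k : midx n) : 'X_{1..4} := (\sum_(x < n) U_(k x))%MM.

Definition midx_perm n (s : {perm 'I_n}) (k : midx n) : midx n :=
  [ffun x => k (s x)].

Definition midx_cons n (j : 'I_4) (k : midx n) : midx n.+1 :=
  [ffun x => if unlift ord0 x is Some y then k y else j].

Definition midx_behead n (k : midx n.+1) : midx n := [ffun x => k (lift ord0 x)].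

Lemma midx_mnmE n (k : midx n) c : midx_mnm k c = (\sum_(x < n) (k x == c))%N.
Proof. by rewrite mnm_sumE; apply: eq_bigr => x _; rewrite mnm1E. Qed.

Lemma midx_mnm_perm n s (k : midx n) : midx_mnm (midx_perm s k) = midx_mnm k.
Proof.
apply/mnmP => c; rewrite !midx_mnmE [RHS](reindex_inj (@perm_inj _ s)) /=.
by apply: eq_bigr => x _; rewrite ffunE.
Qed.

Lemma midx_perm_inj n s : injective (@midx_perm n s).
Proof.
move=> k1 k2 /ffunP eq_k; apply/ffunP => y.
by have := eq_k (s^-1 y)%g; rewrite !ffunE permKV.
Qed.

Lemma midx_mnm_eq_perm n (k k0 : midx n) :
  midx_mnm k = midx_mnm k0 -> exists s, k = midx_perm s k0.
Proof.
move=> eq_mnm.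
have count_mnm (k1 : midx n) c : count_mem c [tuple k1 x | x < n] = midx_mnm k1 c.
  rewrite midx_mnmE /= count_map -sum1_count big_mkcond -big_enum /=.
  by apply: eq_bigr => x _; case: (k1 x == c).
have /tuple_permP[s eq_s] : perm_eq [tuple k x | x < n] [tuple k0 x | x < n].
  by apply/allP => c _; apply/eqP; rewrite !count_mnm eq_mnm.
exists s; apply/ffunP => x; have /(congr1 (fun t => tnth t x)) := val_inj eq_s.
by rewrite !tnth_mktuple ffunE.
Qed.

Lemma midx_cons0 n j (k : midx n) : midx_cons j k ord0 = j.
Proof. by rewrite ffunE unlift_none. Qed.

Lemma midx_consS n j (k : midx n) y : midx_cons j k (lift ord0 y) = k y.
Proof. by rewrite ffunE liftK. Qed.

Lemma midx_behead_cons n j (k : midx n) : midx_behead (midx_cons j k) = k.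
Proof. by apply/ffunP => y; rewrite ffunE midx_consS. Qed.

Lemma midx_cons_behead n (k : midx n.+1) : midx_cons (k ord0) (midx_behead k) = k.
Proof.
apply/ffunP => x; rewrite ffunE; case: unliftP => [y ->|->] //.
by rewrite ffunE.
Qed.

Lemma midx_cons_perm n j s (k : midx n) :
  midx_cons j (midx_perm s k) = midx_perm (lift_perm ord0 ord0 s) (midx_cons j k).
Proof.
apply/ffunP => x; rewrite [RHS]ffunE; case: (unliftP ord0 x) => [y ->|->].
  by rewrite lift_perm_lift !midx_consS ffunE.
by rewrite lift_perm_id !midx_cons0.
Qed.

Lemma big_midx_cons (V : nmodType) n (G : midx n.+1 -> V) :
  \sum_k G k = \sum_(j : 'I_4) \sum_(k : midx n) G (midx_cons j k).
Proof.
rewrite pair_big /= (reindex (fun p : 'I_4 * midx n => midx_cons p.1 p.2)) //=.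
exists (fun k : midx n.+1 => (k ord0, midx_behead k)) => [[j k] _|k _] /=.
  by rewrite midx_cons0 midx_behead_cons.
by rewrite midx_cons_behead.
Qed.

Lemma midx_mnm_cons n j (k : midx n) :
  midx_mnm (midx_cons j k) = (U_(j) + midx_mnm k)%MM.
Proof.
rewrite /midx_mnm big_ord_recl midx_cons0; congr (_ + _)%MM.
by apply: eq_bigr => y _; rewrite midx_consS.
Qed.

Lemma midx_mnm_ext2 p (k : midx p) j l :
  midx_mnm (ext2 k j l) = (midx_mnm k + U_(j) + U_(l))%MM.
Proof.
rewrite /midx_mnm big_split_ord /= -addmA; congr (_ + _)%MM.
  apply: eq_bigr => x _; rewrite ffunE.
  by have /= -> := unsplitK (inl x : 'I_p + 'I_2).
have ext2_rshift y : ext2 k j l (rshift p y) = if y == 0 :> nat then j else l.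
  by rewrite ffunE; have /= -> := unsplitK (inr y : 'I_p + 'I_2).
by rewrite !big_ord_recr big_ord0 /= !ext2_rshift add0m.
Qed.

Section GenPoly.
Variable R : comNzRingType.

Definition gen_poly n (F : midx n -> R) : {mpoly R[4]} :=
  \sum_k F k *: 'X_[midx_mnm k].

Definition first_trace n (T : 'I_4 -> midx n.+1 -> R) (k : midx n) : R :=
  \sum_j T j (midx_cons j k).

Lemma mcoeff_gen_poly n (F : midx n -> R) m :
  (gen_poly F)@_m = \sum_k F k * (midx_mnm k == m)%:R.
Proof.
rewrite raddf_sum; apply: eq_bigr => k _ /=.
by rewrite mcoeffZ mcoeffX.
Qed.

Lemma gen_polyB n (F G : midx n -> R) :
  gen_poly (fun k => F k - G k) = gen_poly F - gen_poly G.
Proof. by rewrite -sumrB; apply: eq_bigr => k _; rewrite scalerBl. Qed.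

Lemma gen_polyZ n c (F : midx n -> R) :
  gen_poly (fun k => c * F k) = c *: gen_poly F.
Proof. by rewrite scaler_sumr; apply: eq_bigr => k _; rewrite scalerA. Qed.

Lemma gen_poly_sum n (I : finType) (F : I -> midx n -> R) :
  gen_poly (fun k => \sum_i F i k) = \sum_i gen_poly (F i).
Proof. by rewrite exchange_big; apply: eq_bigr => k _; rewrite scaler_suml. Qed.

Lemma gen_poly_cons n (F : midx n.+1 -> R) :
  gen_poly F = \sum_j 'X_j * gen_poly (fun k => F (midx_cons j k)).
Proof.
rewrite /gen_poly big_midx_cons; apply: eq_bigr => j _.
rewrite mulr_sumr; apply: eq_bigr => k _.
by rewrite midx_mnm_cons mpolyXD scalerAr.
Qed.

Lemma mderiv_gen_poly n (F : midx n.+1 -> R) j : totally_symmetric F ->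
  mderiv j (gen_poly F) = n.+1%:R *: gen_poly (fun k => F (midx_cons j k)).
Proof.
move=> symF.
pose D x := \sum_(k : midx n.+1) ((k x == j)%:R * F k) *: 'X_[midx_mnm k - U_(j)].
have -> : mderiv j (gen_poly F) = \sum_(x < n.+1) D x.
  rewrite raddf_sum exchange_big; apply: eq_bigr => k _ /=.
  rewrite linearZ /= mderivX midx_mnmE natr_sum scalerA -scaler_suml.
  by rewrite -mulr_suml mulrC.
have D_ord0 x : D x = D ord0.
  rewrite /D (reindex_inj (@midx_perm_inj _ (tperm ord0 x))).
  apply: eq_bigr => k _.
  by rewrite midx_mnm_perm ffunE tpermR (symF (tperm ord0 x) k).
rewrite (eq_bigr _ (fun x _ => D_ord0 x)) sumr_const card_ord -scaler_nat.
congr (_ *: _); rewrite /D big_midx_cons (bigD1 j) //= [X in _ + X]big1 ?addr0.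
  apply: eq_bigr => k _.
  by rewrite midx_cons0 eqxx mul1r midx_mnm_cons addmC addmK.
move=> j' /negbTE nj'j; apply: big1 => k _.
by rewrite midx_cons0 nj'j mul0r scale0r.
Qed.

Lemma gen_poly_euler n (F : midx n.+1 -> R) : totally_symmetric F ->
  \sum_j 'X_j * mderiv j (gen_poly F) = n.+1%:R *: gen_poly F.
Proof.
move=> symF; rewrite [in RHS]gen_poly_cons scaler_sumr.
by apply: eq_bigr => j _; rewrite mderiv_gen_poly // scalerAr.
Qed.

Lemma sum_mderiv_gen_poly n (T : 'I_4 -> midx n.+1 -> R) :
  (forall j, totally_symmetric (T j)) ->
  \sum_j mderiv j (gen_poly (T j)) = n.+1%:R *: gen_poly (first_trace T).
Proof.
move=> symT; rewrite gen_poly_sum scaler_sumr.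
by apply: eq_bigr => j _; rewrite mderiv_gen_poly.
Qed.

Lemma first_trace_sym n (T : 'I_4 -> midx n.+1 -> R) :
  (forall j, totally_symmetric (T j)) -> totally_symmetric (first_trace T).
Proof.
move=> symT s k; apply: eq_bigr => j _.
exact: (etrans (congr1 (T j) (midx_cons_perm j s k)) (symT _ _ _)).
Qed.

Definition minkowski_form : {mpoly R[4]} :=
  \sum_j \sum_l eta_inv j l *: ('X_j * 'X_l).

Lemma minkowski_form_neq0 : minkowski_form != 0.
Proof.
pose m : 'X_{1..4} := (U_(ord0) + U_(ord0))%MM.
have coef_XX j l : ('X_j * 'X_l : {mpoly R[4]})@_m = ((j == ord0) && (l == ord0))%:R.
  rewrite -mpolyXD mcoeffX; congr ((nat_of_bool _)%:R).
  apply/eqP/andP => [/mnmP/(_ ord0)|[/eqP-> /eqP->] //].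
  by rewrite !mnmDE !mnm1E; case: (j == ord0); case: (l == ord0).
have coef_form : minkowski_form@_m = eta_inv ord0 ord0.
  rewrite raddf_sum (bigD1 ord0) //= [X in _ + X]big1 ?addr0 => [|j /negbTE nj0].
    rewrite raddf_sum (bigD1 ord0) //= [X in _ + X]big1 ?addr0 => [|l /negbTE nl0].
      by rewrite mcoeffZ coef_XX eqxx mulr1.
    by rewrite mcoeffZ coef_XX nl0 andbF mulr0.
  by rewrite raddf_sum big1 // => l _ /=; rewrite mcoeffZ coef_XX nj0 mulr0.
apply/eqP => /(congr1 (mcoeff m)); rewrite coef_form mcoeff0 /eta_inv /=.
by move/eqP; rewrite oppr_eq0 oner_eq0.
Qed.

End GenPoly.

Lemma gen_poly_sym_inj (R : numDomainType) n (F G : midx n -> R) :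
  totally_symmetric F -> totally_symmetric G ->
  gen_poly F = gen_poly G -> forall k, F k = G k.
Proof.
move=> symF symG /eqP; rewrite -subr_eq0 -gen_polyB => /eqP eq0 k0.
apply/eqP; rewrite -subr_eq0; apply/eqP.
have := mcoeff_gen_poly (fun k => F k - G k) (midx_mnm k0).
rewrite eq0 mcoeff0 => /esym/eqP.
have -> : \sum_(k : midx n) (F k - G k) * (midx_mnm k == midx_mnm k0)%:R =
          (F k0 - G k0) * \sum_(k : midx n) (midx_mnm k == midx_mnm k0)%:R.
  rewrite mulr_sumr; apply: eq_bigr => k _.
  case: eqP => [/midx_mnm_eq_perm[s ->]|_]; last by rewrite !mulr0.
  by rewrite (symF s k0) (symG s k0).
rewrite mulf_eq0 -natr_sum pnatr_eq0 (bigD1 k0) //= eqxx => /orP[/eqP //|].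
by rewrite addn_eq0.
Qed.

Section SymDelta.
Variable R : realType.

Lemma sym_delta_S_sym q i (S : midx q -> R) : totally_symmetric (sym_delta_S i S).
Proof.
move=> s k; congr (_ * _); rewrite [RHS](reindex_inj (mulIg s)) /=.
apply: eq_bigr => s' _; rewrite !ffunE !permM; congr (_ * S _).
by apply/ffunP => x; rewrite !ffunE permM.
Qed.

Lemma gen_poly_sym_delta_S q i (S : midx q -> R) :
  gen_poly (sym_delta_S i S) = 'X_i * gen_poly S.
Proof.
have summand_perm (s : {perm 'I_q.+1}) :
    \sum_(k : midx q.+1)
      (kdelta i (k (s ord0)) * S [ffun x => k (s (lift ord0 x))]) *: 'X_[midx_mnm k]
    = 'X_i * gen_poly S.
  rewrite (reindex_inj (@midx_perm_inj _ s^-1)).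
  transitivity (\sum_(k : midx q.+1)
      (kdelta i (k ord0) * S (midx_behead k)) *: 'X_[midx_mnm k]).
    apply: eq_bigr => k _; rewrite midx_mnm_perm ffunE permK; congr (_ * S _ *: _).
    by apply/ffunP => x; rewrite !ffunE permK.
  rewrite big_midx_cons mulr_sumr (bigD1 i) //= [X in _ + X]big1 ?addr0.
    apply: eq_bigr => k _.
    by rewrite midx_cons0 midx_behead_cons midx_mnm_cons mpolyXD /kdelta eqxx mul1r -scalerAr.
  move=> j /negbTE nji; apply: big1 => k _.
  by rewrite midx_cons0 /kdelta eq_sym nji mul0r scale0r.
rewrite /sym_delta_S gen_polyZ gen_poly_sum (eq_bigr _ (fun s _ => summand_perm s)).
rewrite sumr_const card_Sn -scaler_nat scalerA mulVf ?scale1r //.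
by rewrite pnatr_eq0 -lt0n fact_gt0.
Qed.

End SymDelta.

Section RadialField.
Variable R : comNzRingType.

Lemma mderiv_Xi n (i j : 'I_n) : mderiv j ('X_i : {mpoly R[n]}) = (i == j)%:R.
Proof.
rewrite mderivX mnm1E; case: eqP => [<-|_]; last by rewrite scale0r.
have -> : (U_(i) - U_(i) = 0 :> 'X_{1..n})%MM.
  by apply/mnmP => c; rewrite mnmBE subnn mnm0E.
by rewrite mpolyX0 scale1r.
Qed.

(* d + n = (n + 1) from differentiating the x_j, plus d from Euler's identity,
   minus the term t_i produced on the right by differentiating x_i. *)
Lemma radial_field_div n (t : 'I_n.+1 -> {mpoly R[n.+1]}) d :
  (forall i j, 'X_j * t i = 'X_i * t j) ->
  (forall i, \sum_j 'X_j * mderiv j (t i) = d%:R *: t i) ->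
  forall i, (d + n)%:R *: t i = 'X_i * \sum_j mderiv j (t j).
Proof.
move=> cross euler i.
have div_lhs : \sum_j mderiv j ('X_j * t i) = t i *+ n.+1 + d%:R *: t i.
  transitivity (\sum_(j < n.+1) (t i + 'X_j * mderiv j (t i))).
    by apply: eq_bigr => j _; rewrite mderivM mderiv_Xi eqxx mul1r.
  by rewrite big_split /= sumr_const card_ord euler.
have div_rhs : \sum_j mderiv j ('X_i * t j) = t i + 'X_i * \sum_j mderiv j (t j).
  transitivity (\sum_j ((i == j)%:R * t j + 'X_i * mderiv j (t j))).
    by apply: eq_bigr => j _; rewrite mderivM mderiv_Xi.
  rewrite big_split /= -mulr_sumr; congr (_ + _).
  rewrite (bigD1 i) //= eqxx mul1r big1 ?addr0 // => j /negbTE nji.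
  by rewrite eq_sym nji mul0r.
have := div_lhs; rewrite (eq_bigr _ (fun j _ => congr1 (mderiv j) (cross i j))).
rewrite div_rhs mulrS -addrA => /addrI ->.
by rewrite -scaler_nat natrD scalerDl addrC.
Qed.

End RadialField.

Section Proposition.
Variables (R : realType) (A : finType) (q : nat) (T : A -> 'I_4 -> midx q.+1 -> R).
Hypothesis symT : forall al i, totally_symmetric (T al i).
Hypothesis contraction_eq :
  forall a : A -> midx (q.+1 + 2) -> R,
    (forall al, totally_symmetric (a al)) ->
    forall i : 'I_4,
      \sum_(al : A) \sum_(k : midx q.+1) \sum_(j : 'I_4) \sum_(l : 'I_4)
         T al i k * (eta_inv j l * a al (ext2 k j l))
      = \sum_(al : A) \sum_(k : midx q.+1) \sum_(j : 'I_4) \sum_(l : 'I_4)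
         T al j k * (eta_inv j l * a al (ext2 k i l)).

Definition delta_cofactor al (k : midx q) : R :=
  (q.+1%:R / q.+4%:R) * first_trace (T al) k.

Lemma delta_cofactor_sym al : totally_symmetric (delta_cofactor al).
Proof.
by move=> s k; rewrite /delta_cofactor (first_trace_sym (symT al)).
Qed.

Lemma contraction_eq_at al (b : midx (q.+1 + 2) -> R) :
  totally_symmetric b -> forall i,
    \sum_(k : midx q.+1) \sum_(j : 'I_4) \sum_(l : 'I_4)
       T al i k * (eta_inv j l * b (ext2 k j l))
    = \sum_(k : midx q.+1) \sum_(j : 'I_4) \sum_(l : 'I_4)
       T al j k * (eta_inv j l * b (ext2 k i l)).
Proof.
move=> symb i; pose a al' := if al' == al then b else fun=> 0.
have syma al' : totally_symmetric (a al') by rewrite /a; case: eqP.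
have sum_at (f : A -> R) : (forall al', al' != al -> f al' = 0) -> \sum_al' f al' = f al.
  by move=> f0; rewrite (bigD1 al) //= big1 ?addr0.
have := contraction_eq syma i; rewrite !sum_at /a ?eqxx // => al' /negbTE ->;
  by do 3 (apply: big1 => ? _); rewrite !mulr0.
Qed.

Lemma gen_poly_mul_minkowski al i :
  gen_poly (T al i) * minkowski_form R =
  'X_i * \sum_j \sum_l eta_inv j l *: ('X_l * gen_poly (T al j)).
Proof.
have mcoeff_sum3 m (c : midx q.+1 -> 'I_4 -> 'I_4 -> R) g :
    (\sum_k \sum_j \sum_l c k j l *: 'X_[g k j l])@_m =
    \sum_k \sum_j \sum_l c k j l * (g k j l == m)%:R.
  rewrite raddf_sum; apply: eq_bigr => k _; rewrite raddf_sum; apply: eq_bigr => j _.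
  by rewrite raddf_sum; apply: eq_bigr => l _ /=; rewrite mcoeffZ mcoeffX.
have -> : gen_poly (T al i) * minkowski_form R = \sum_k \sum_j \sum_l
    (T al i k * eta_inv j l) *: 'X_[midx_mnm (ext2 k j l)].
  rewrite mulr_suml; apply: eq_bigr => k _; rewrite mulr_sumr; apply: eq_bigr => j _.
  rewrite mulr_sumr; apply: eq_bigr => l _.
  by rewrite midx_mnm_ext2 !mpolyXD -scalerAl -scalerAr scalerA mulrA.
have -> : 'X_i * \sum_j \sum_l eta_inv j l *: ('X_l * gen_poly (T al j)) =
    \sum_k \sum_j \sum_l (T al j k * eta_inv j l) *: 'X_[midx_mnm (ext2 k i l)].
  rewrite mulr_sumr [RHS]exchange_big; apply: eq_bigr => j _ /=.
  rewrite mulr_sumr [RHS]exchange_big; apply: eq_bigr => l _ /=.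
  rewrite mulr_sumr scaler_sumr mulr_sumr; apply: eq_bigr => k _.
  rewrite midx_mnm_ext2 !mpolyXD -!scalerAr scalerA mulrC; congr (_ *: _).
  by rewrite mulrA mulrC mulrA.
apply/mpolyP => m; rewrite !mcoeff_sum3.
have symb : totally_symmetric (fun M : midx (q.+1 + 2) => (midx_mnm M == m)%:R : R).
  by move=> s M; rewrite (midx_mnm_perm s M).
have := contraction_eq_at al symb i.
by under eq_bigr do under eq_bigr do under eq_bigr do rewrite mulrA;
   under [in RHS]eq_bigr do under eq_bigr do under eq_bigr do rewrite mulrA.
Qed.

Lemma gen_poly_cross al i j :
  'X_j * gen_poly (T al i) = 'X_i * gen_poly (T al j).
Proof.
apply: (mulIf (minkowski_form_neq0 R)).
by rewrite -!mulrA !gen_poly_mul_minkowski mulrCA.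
Qed.

Lemma gen_poly_radial al i :
  gen_poly (T al i) = 'X_i * gen_poly (delta_cofactor al).
Proof.
have := @radial_field_div R 3 (fun j => gen_poly (T al j)) q.+1
  (gen_poly_cross al) (fun j => gen_poly_euler (symT al j)) i.
rewrite /= sum_mderiv_gen_poly // addn3 -scalerAr => radial.
have q4_neq0 : q.+4%:R != 0 :> R by rewrite pnatr_eq0.
apply: (scalerI q4_neq0); rewrite radial /delta_cofactor gen_polyZ -scalerAr scalerA.
by rewrite mulrCA mulfV // mulr1.
Qed.

End Proposition.

Theorem proposition3p1 (R : realType) (A : finType) (q : nat)
  (T : A -> 'I_4 -> midx q.+1 -> R) :
  (forall al i, totally_symmetric (T al i)) ->
  (forall a : A -> midx (q.+1 + 2) -> R,
     (forall al, totally_symmetric (a al)) ->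
     forall i : 'I_4,
       \sum_(al : A) \sum_(k : midx q.+1) \sum_(j : 'I_4) \sum_(l : 'I_4)
          T al i k * (eta_inv j l * a al (ext2 k j l))
       = \sum_(al : A) \sum_(k : midx q.+1) \sum_(j : 'I_4) \sum_(l : 'I_4)
          T al j k * (eta_inv j l * a al (ext2 k i l))) ->
  exists S : A -> midx q -> R,
    (forall al, totally_symmetric (S al)) /\
    (forall al i k, T al i k = sym_delta_S i (S al) k).
Proof.
move=> symT contraction_eq; exists (delta_cofactor T); split.
  exact: delta_cofactor_sym.
move=> al i; apply: gen_poly_sym_inj => //; first exact: sym_delta_S_sym.
by rewrite gen_poly_sym_delta_S; apply: gen_poly_radial.
Qed.
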